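(* Let $W \in \mathcal{D}_1$. Then $L(LWR)^{-1}R \in \mathcal{D}_1$, and $R$ is a prefix of $L(LWR)^{-1}R$, i.e. $L(LWR)^{-1}R = RU$ for some $U \in \mathcal{D}_1$.
   Context: $L = \begin{pmatrix} 1 & 0 \\ 1 & 1\end{pmatrix}$ and $R = \begin{pmatrix} 1 & 1 \\ 0 & 1\end{pmatrix}$. $\mathcal{D}_1$ denotes the set of $2\times 2$ matrices with nonnegative integer entries and determinant $1$. The map sending a finite word over the alphabet $\{L,R\}$ to the product of the corresponding matrices is an isomorphism of the free monoid $\{L,R\}^*$ onto $\mathcal{D}_1$ (the empty word maps to the identity), so elements of $\mathcal{D}_1$ are identified with words over $\{L,R\}$; ''prefix'' refers to this word representation. *)

From mathcomp Require Import all_boot all_order all_algebra.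
Set Implicit Arguments. Unset Strict Implicit. Unset Printing Implicit Defensive.
Import Order.TTheory GRing.Theory Num.Theory.
Local Open Scope ring_scope.

(* L = [[1,0],[1,1]] : entry (i,j) is 1 iff j <= i *)
Definition Lmx : 'M[int]_2 := \matrix_(i < 2, j < 2) (if (j <= i)%N then 1 else 0).
(* R = [[1,1],[0,1]] : entry (i,j) is 1 iff i <= j *)
Definition Rmx : 'M[int]_2 := \matrix_(i < 2, j < 2) (if (i <= j)%N then 1 else 0).

Definition D1 (M : 'M[int]_2) : Prop := (forall i j, 0 <= M i j) /\ \det M = 1.

From mathcomp Require Import all_boot all_order all_algebra.
From mathcomp Require Import ring.
Set Implicit Arguments. Unset Strict Implicit. Unset Printing Implicit Defensive.
Import GRing.Theory Num.Theory.
Local Open Scope ring_scope.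

(* For a 2x2 matrix M of determinant 1 the inverse is the adjugate
   J M^T J^T, where J = [[0,1],[-1,0]].  Hence
   L (LWR)^-1 R = (L J L) W^T (R J^T R) = R W^T L,
   and U = W^T L lies in D_1, which is closed under transposition and
   products. *)

Definition Jmx {R : pzRingType} : 'M[R]_2 :=
  \matrix_(i < 2, j < 2) ((i < j)%N%:R - (j < i)%N%:R).

Lemma ord2P (i : 'I_2) : i = 0 \/ i = 1.
Proof. by case: i => -[|[|//]] ?; [left|right]; apply/val_inj. Qed.

Lemma lift_ord2 (i : 'I_2) (j : 'I_1) : lift i j = (i == 0)%:R.
Proof. by case: (ord2P i) => ->; rewrite (ord1 j); apply/val_inj. Qed.

Lemma adj_mx2 (R : comPzRingType) (M : 'M[R]_2) : \adj M = Jmx *m M^T *m Jmx^T.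
Proof.
apply/matrixP => i j; case: (ord2P i) => ->; case: (ord2P j) => ->;
  rewrite !(mxE, big_ord_recl, big_ord0) /cofactor det_mx11 !mxE !lift_ord2 /=;
  ring.
Qed.

Lemma invmx_det1 (R : comUnitRingType) n (M : 'M[R]_n) :
  \det M = 1 -> invmx M = \adj M.
Proof. by move=> detM; rewrite /invmx unitmxE detM unitr1 invr1 scale1r. Qed.

Lemma tr_Lmx : Lmx^T = Rmx.
Proof. by apply/matrixP => i j; rewrite !mxE. Qed.

Lemma tr_Rmx : Rmx^T = Lmx.
Proof. by rewrite -tr_Lmx trmxK. Qed.

Lemma det_Lmx : \det Lmx = 1.
Proof.
rewrite det_trig; last by apply/is_trig_mxP => i j lt_ij; rewrite mxE leqNgt lt_ij.
by rewrite big1 // => i _; rewrite mxE leqnn.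
Qed.

Lemma det_Rmx : \det Rmx = 1.
Proof. by rewrite -tr_Lmx det_tr det_Lmx. Qed.

Lemma Lmx_Jmx_Lmx : Lmx *m Jmx *m Lmx = Rmx.
Proof.
apply/matrixP => i j; case: (ord2P i) => ->; case: (ord2P j) => ->;
  by rewrite !(mxE, big_ord_recl, big_ord0) !lift_ord2.
Qed.

Lemma Rmx_trJmx_Rmx : Rmx *m Jmx^T *m Rmx = Lmx.
Proof.
apply/matrixP => i j; case: (ord2P i) => ->; case: (ord2P j) => ->;
  by rewrite !(mxE, big_ord_recl, big_ord0) !lift_ord2.
Qed.

Lemma Lmx_invmx_Rmx (W : 'M[int]_2) :
  \det W = 1 -> Lmx *m invmx (Lmx *m W *m Rmx) *m Rmx = Rmx *m W^T *m Lmx.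
Proof.
move=> detW; have detLWR : \det (Lmx *m W *m Rmx) = 1.
  by rewrite !det_mulmx det_Lmx det_Rmx detW !mul1r.
rewrite invmx_det1 // adj_mx2 !trmx_mul tr_Lmx tr_Rmx !mulmxA Lmx_Jmx_Lmx.
by rewrite -!(mulmxA (Rmx *m W^T)) Rmx_trJmx_Rmx.
Qed.

Lemma D1_mulmx (A B : 'M[int]_2) : D1 A -> D1 B -> D1 (A *m B).
Proof.
move=> [A_ge0 detA] [B_ge0 detB]; split; last by rewrite det_mulmx detA detB mul1r.
by move=> i j; rewrite mxE sumr_ge0 // => k _; rewrite mulr_ge0.
Qed.

Lemma D1_trmx (A : 'M[int]_2) : D1 A -> D1 A^T.
Proof. by move=> [A_ge0 detA]; split=> [i j|]; rewrite ?mxE ?det_tr. Qed.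

Lemma D1_Lmx : D1 Lmx.
Proof. by split=> [i j|]; rewrite ?det_Lmx // mxE; case: (_ <= _)%N. Qed.

Lemma D1_Rmx : D1 Rmx.
Proof. by rewrite -tr_Lmx; apply/D1_trmx/D1_Lmx. Qed.

Theorem lemma8 (W : 'M[int]_2) :
  D1 W ->
  D1 (Lmx *m invmx (Lmx *m W *m Rmx) *m Rmx) /\
  exists U : 'M[int]_2, D1 U /\ Lmx *m invmx (Lmx *m W *m Rmx) *m Rmx = Rmx *m U.
Proof.
move=> D1W; rewrite Lmx_invmx_Rmx; last by case: D1W.
have D1U : D1 (W^T *m Lmx) := D1_mulmx (D1_trmx D1W) D1_Lmx.
split; last by exists (W^T *m Lmx); rewrite mulmxA.
by rewrite -mulmxA; apply: D1_mulmx D1_Rmx D1U.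
Qed.
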